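(* Let $\mathbf{X}$ be a set of discrete random variables with sample space $\Omega(\mathbf{X})$, let $o$ be a decomposable and smooth positive unital circuit (D-PUnC) whose root has scope $\mathbf{X}$, and let $\rho$ be a density matrix of the same size as the root operator. Then $p_{\mathbf{X}}(\mathbf{x})=\operatorname{Tr}[o(\mathbf{x})\rho]$ is a probability distribution on $\Omega(\mathbf{X})$: $p_{\mathbf{X}}(\mathbf{x})\ge 0$ for all $\mathbf{x}$ and $\sum_{\mathbf{x}\in\Omega(\mathbf{X})}p_{\mathbf{X}}(\mathbf{x})=1$.
   Context: A density matrix is a PSD complex matrix of trace one; a POVM is a finite family of PSD matrices summing to the identity. A quantum operation from $d\times d$ to $d'\times d'$ matrices is $\Phi(A)=\sum_jK_jAK_j^*$ with $d'\times d$ matrices $K_j$, $\sum_jK_j^*K_j\le\mathbb{1}$ (Loewner order); it is unital if $\Phi(\mathbb{1}_d)=\mathbb{1}_{d'}$. A positive unital circuit (in this unstructured form) over $\mathbf{X}$ is a rooted directed acyclic computation graph with three kinds of units. A leaf unit $k$ is associated with one variable $X_k$ (finite sample space $\Omega(X_k)$) and a POVM $\{e_{x}\}_{x\in\Omega(X_k)}$, and computes $o_k(x_k)=e_{x_k}$. A product unit $k$ has two inputs $k_l,k_r$ and computes $o_k=o_{k_l}(\mathbf{x}_{k_l})\otimes o_{k_r}(\mathbf{x}_{k_r})$ (Kronecker product). A sum unit $k$ with input set $\mathrm{in}(k)$ computes $o_k=\sum_{j\in\mathrm{in}(k)}w_{kj}\Phi_{kj}(o_j(\mathbf{x}_j))$,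 where the $\Phi_{kj}$ are unital quantum operations into a common matrix size and $w_{kj}>0$ are reals with $\sum_jw_{kj}=1$. The scope $\phi(k)$ of a unit is $\{X_k\}$ for a leaf and the union of the scopes of its inputs otherwise; $\mathbf{x}_k$ is an assignment to $\phi(k)$, and $o(\mathbf{x})$ denotes the root's output. The circuit is decomposable if for every product unit $\phi(k_l)\cap\phi(k_r)=\emptyset$, and smooth if all inputs of every sum unit have the same scope. *)

(* Scalars: an arbitrary numClosedFieldType C (e.g. complex R
   for a real closed field R, or algC); order/positivity on C is the canonical
   partial order (0 <= z  iff  z is real and nonnegative). *)
From HB Require Import structures.
From mathcomp Require Import all_boot all_order all_algebra.
From mathcomp Require Import mxtens.
Set Implicit Arguments. Unset Strict Implicit. Unset Printing Implicit Defensive.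
Import Order.TTheory GRing.Theory Num.Theory.
Local Open Scope ring_scope.

Section Defs.
Variable C : numClosedFieldType.

Definition adjmx m n (A : 'M[C]_(m, n)) : 'M[C]_(n, m) := (map_mx Num.conj A)^T.

Definition psd n (A : 'M[C]_n) : Prop :=
  adjmx A = A /\ forall v : 'cV[C]_n, 0 <= (adjmx v *m A *m v) 0 0.

Definition loewner_le n (A B : 'M[C]_n) : Prop := psd (B - A).

Definition density_matrix n (rho : 'M[C]_n) : Prop := psd rho /\ \tr rho = 1.

Definition is_POVM (I : finType) n (e : I -> 'M[C]_n) : Prop :=
  (forall i, psd (e i)) /\ \sum_(i : I) e i = 1%:M.

Definition qop_apply d' d m (K : 'I_m -> 'M[C]_(d', d)) (A : 'M[C]_d) : 'M[C]_d' :=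
  \sum_(j < m) K j *m A *m adjmx (K j).

Definition is_quantum_operation d' d m (K : 'I_m -> 'M[C]_(d', d)) : Prop :=
  loewner_le (\sum_(j < m) adjmx (K j) *m K j) 1%:M.

Definition is_unital_qop d' d m (K : 'I_m -> 'M[C]_(d', d)) : Prop :=
  is_quantum_operation K /\ qop_apply K 1%:M = 1%:M.

Variable V : finType.
Variable Omega : V -> finType.

(* A rooted DAG is represented by its tree unfolding (shared sub-units are
   duplicated), which has the same outputs, scopes, decomposability and
   smoothness. *)
Inductive circuit : nat -> Type :=
| Leaf (d : nat) (v : V) (e : Omega v -> 'M[C]_d) : circuit d
| Prod (d1 d2 : nat) (l : circuit d1) (r : circuit d2) : circuit (d1 * d2)
| Sum (d n : nat) (din : 'I_n -> nat) (ch : forall j : 'I_n, circuit (din j))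
      (w : 'I_n -> C) (m : 'I_n -> nat)
      (K : forall j : 'I_n, 'I_(m j) -> 'M[C]_(d, din j)) : circuit d.

Fixpoint scope d (c : circuit d) : {set V} :=
  match c with
  | Leaf _ v _ => [set v]
  | Prod _ _ l r => scope l :|: scope r
  | Sum _ n _ ch _ _ _ => \bigcup_(j < n) scope (ch j)
  end.

Fixpoint eval d (c : circuit d) (x : forall v : V, Omega v) : 'M[C]_d :=
  match c in circuit d return 'M[C]_d with
  | Leaf _ v e => e (x v)
  | Prod _ _ l r => eval l x *t eval r x
  | Sum _ n _ ch w _ K => \sum_(j < n) w j *: qop_apply (K j) (eval (ch j) x)
  end.

Fixpoint is_PUnC d (c : circuit d) : Prop :=
  match c with
  | Leaf _ v e => is_POVM e
  | Prod _ _ l r => is_PUnC l /\ is_PUnC r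
  | Sum _ n _ ch w _ K =>
      (forall j, is_PUnC (ch j)) /\
      (forall j, w j \is Num.real /\ 0 < w j) /\ \sum_(j < n) w j = 1 /\
      (forall j, is_unital_qop (K j))
  end.

Fixpoint decomposable d (c : circuit d) : Prop :=
  match c with
  | Leaf _ _ _ => True
  | Prod _ _ l r => decomposable l /\ decomposable r /\ [disjoint scope l & scope r]
  | Sum _ n _ ch _ _ _ => forall j, decomposable (ch j)
  end.

Fixpoint smooth d (c : circuit d) : Prop :=
  match c with
  | Leaf _ _ _ => True
  | Prod _ _ l r => smooth l /\ smooth r
  | Sum _ n _ ch _ _ _ =>
      (forall j, smooth (ch j)) /\ (forall j k, scope (ch j) = scope (ch k))
  end.

End Defs.

(* Positivity: every unit outputs a PSD matrix, because PSD matrices are closed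
   under Kronecker products (write A = W W^* via the spectral theorem), under
   congruences K A K^* and under nonnegative combinations; and Tr (A B) >= 0 for
   PSD A and B.
   Normalisation: summing the output of a unit over all assignments of its
   scope gives the identity.  For a leaf this is the POVM condition; for a
   product, decomposability factors the sum into a Kronecker product of two such
   sums, 1 (x) 1 = 1; for a sum unit, smoothness gives every child the scope of
   the unit, and unitality and sum_j w_j = 1 turn the children's identities into
   the identity.  Hence sum_x Tr (o(x) rho) = Tr rho = 1.  This needs every
   sample space in the scope to be inhabited, which holds since an empty one
   would force 1 = 0 at the root, contradicting Tr rho = 1. *)

From HB Require Import structures.
From mathcomp Require Import all_boot all_order all_algebra.
From mathcomp Require Import mxtens spectral.
Set Implicit Arguments. Unset Strict Implicit. Unset Printing Implicit Defensive.
Import Order.TTheory GRing.Theory Num.Theory.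
Local Open Scope ring_scope.

Section Adjoint.
Variable C : numClosedFieldType.

Lemma adjmxK m n (A : 'M[C]_(m, n)) : adjmx (adjmx A) = A.
Proof. by apply/matrixP=> i j; rewrite !mxE conjCK. Qed.

Lemma adjmxM m n p (A : 'M[C]_(m, n)) (B : 'M[C]_(n, p)) :
  adjmx (A *m B) = adjmx B *m adjmx A.
Proof. by rewrite /adjmx map_mxM trmx_mul. Qed.

Lemma adjmxD m n (A B : 'M[C]_(m, n)) : adjmx (A + B) = adjmx A + adjmx B.
Proof. by rewrite /adjmx map_mxD linearD. Qed.

Lemma adjmxZ m n c (A : 'M[C]_(m, n)) : adjmx (c *: A) = c^* *: adjmx A.
Proof. by apply/matrixP=> i j; rewrite !mxE rmorphM. Qed.

Lemma adjmxT m n p q (A : 'M[C]_(m, n)) (B : 'M[C]_(p, q)) :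
  adjmx (A *t B) = adjmx A *t adjmx B.
Proof. by rewrite /adjmx map_mxT trmx_tens. Qed.

Lemma adjmx_delta n (i : 'I_n) : adjmx (delta_mx i 0 : 'cV[C]_n) = delta_mx 0 i.
Proof. by apply/matrixP=> a b; rewrite !mxE rmorph_nat andbC. Qed.

Lemma mxtrace_gram_ge0 m n (W : 'M[C]_(m, n)) : 0 <= \tr (adjmx W *m W).
Proof.
apply: sumr_ge0 => i _; rewrite mxE; apply: sumr_ge0 => j _.
by rewrite !mxE mulrC mul_conjC_ge0.
Qed.

End Adjoint.

Section Tensor.
Variable R : comPzRingType.

Lemma tensmxDl m n p q (A B : 'M[R]_(m, n)) (D : 'M[R]_(p, q)) :
  (A + B) *t D = A *t D + B *t D.
Proof. by apply/matrixP=> i j; rewrite !mxE mulrDl. Qed.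

Lemma tensmxDr m n p q (A : 'M[R]_(m, n)) (B D : 'M[R]_(p, q)) :
  A *t (B + D) = A *t B + A *t D.
Proof. by apply/matrixP=> i j; rewrite !mxE mulrDr. Qed.

Lemma tensmx_suml m n p q (I : Type) (r : seq I) (P : pred I)
    (F : I -> 'M[R]_(m, n)) (D : 'M[R]_(p, q)) :
  (\sum_(i <- r | P i) F i) *t D = \sum_(i <- r | P i) F i *t D.
Proof.
apply: (big_morph (fun M => M *t D)); first by move=> A B; rewrite tensmxDl.
by rewrite tens0mx.
Qed.

Lemma tensmx_sumr m n p q (I : Type) (r : seq I) (P : pred I)
    (A : 'M[R]_(m, n)) (F : I -> 'M[R]_(p, q)) :
  A *t (\sum_(i <- r | P i) F i) = \sum_(i <- r | P i) A *t F i.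
Proof.
apply: (big_morph (fun M => A *t M)); first by move=> B D; rewrite tensmxDr.
by rewrite tensmx0.
Qed.

Lemma tensmx1 m n : (1%:M : 'M[R]_m) *t (1%:M : 'M[R]_n) = 1%:M.
Proof.
apply/matrixP=> i j.
case: (mxtens_indexP i) => i0 i1; case: (mxtens_indexP j) => j0 j1.
rewrite tensmxE !mxE (can_eq (@mxtens_indexK m n)) xpair_eqE.
by case: (i0 == j0); case: (i1 == j1); rewrite ?mulr1 ?mulr0.
Qed.

End Tensor.

Section PSD.
Variable C : numClosedFieldType.

Lemma psd_gram m n (W : 'M[C]_(m, n)) : psd (W *m adjmx W).
Proof.
split=> [|v]; first by rewrite adjmxM adjmxK.
rewrite -!mulmxA mulmxA -{1}[W]adjmxK -adjmxM mxE.
by apply: sumr_ge0 => j _; rewrite !mxE mulrC mul_conjC_ge0.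
Qed.

Lemma psd_conj m n (K : 'M[C]_(m, n)) (A : 'M[C]_n) : psd A -> psd (K *m A *m adjmx K).
Proof.
move=> [hA qA]; split=> [|v]; first by rewrite !adjmxM adjmxK hA mulmxA.
by have := qA (adjmx K *m v); rewrite adjmxM adjmxK !mulmxA.
Qed.

Lemma psd0 n : psd (0 : 'M[C]_n).
Proof.
split=> [|v]; first by apply/matrixP=> i j; rewrite !mxE rmorph0.
by rewrite mulmx0 mul0mx mxE.
Qed.

Lemma psdD n (A B : 'M[C]_n) : psd A -> psd B -> psd (A + B).
Proof.
move=> [hA qA] [hB qB]; split=> [|v]; first by rewrite adjmxD hA hB.
by rewrite mulmxDr mulmxDl mxE addr_ge0.
Qed.

Lemma psd_sum n (I : Type) (r : seq I) (P : pred I) (F : I -> 'M[C]_n) :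
  (forall i, P i -> psd (F i)) -> psd (\sum_(i <- r | P i) F i).
Proof. by move=> psdF; elim/big_ind: _ => //; [exact: psd0 | exact: psdD]. Qed.

Lemma psdZ n c (A : 'M[C]_n) : 0 <= c -> psd A -> psd (c *: A).
Proof.
move=> c_ge0 [hA qA]; split=> [|v]; first by rewrite adjmxZ hA conj_Creal ?ger0_real.
by rewrite -scalemxAr -scalemxAl mxE mulr_ge0.
Qed.

Lemma psd_gram_factor n (A : 'M[C]_n) : psd A -> exists W : 'M[C]_n, A = W *m adjmx W.
Proof.
move=> [hA qA].
have /orthomx_spectralP : A \is normalmx.
  by apply/normalmxP; rewrite -map_trmx -/(adjmx A) hA.
set P := spectralmx A; set D := spectral_diag A.
have P_unitary : P *m adjmx P = 1%:M.
  by rewrite /adjmx map_trmx; apply/unitarymxP/spectral_unitarymx.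
rewrite invmx_unitary ?spectral_unitarymx // -map_trmx -/(adjmx P) => eA.
have D_ge0 i : 0 <= D 0 i.
  (* the quadratic form at the i-th eigenvector, column i of P^*, is D 0 i *)
  have := qA (adjmx P *m delta_mx i 0).
  rewrite adjmxM adjmxK adjmx_delta eA !mulmxA -(mulmxA _ P) P_unitary mulmx1.
  by rewrite -(mulmxA _ P) P_unitary mulmx1 -rowE -colE !mxE eqxx mulr1n.
exists (adjmx P *m diag_mx (\row_j sqrtC (D 0 j))).
rewrite adjmxM adjmxK {1}eA -!mulmxA; congr (_ *m _); rewrite mulmxA; congr (_ *m _).
rewrite mul_diag_mx; apply/matrixP=> i j; rewrite !mxE.
have [<-|_] := eqVneq i j; last by rewrite !mulr0n rmorph0 mulr0.
by rewrite !mulr1n conj_Creal ?ger0_real ?sqrtC_ge0 // -expr2 sqrtCK.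
Qed.

Lemma psd_tens m n (A : 'M[C]_m) (B : 'M[C]_n) : psd A -> psd B -> psd (A *t B).
Proof.
move=> /psd_gram_factor [W ->] /psd_gram_factor [U ->].
by rewrite -tensmx_mul -adjmxT; apply: psd_gram.
Qed.

Lemma mxtrace_psdM_ge0 n (A B : 'M[C]_n) : psd A -> psd B -> 0 <= \tr (A *m B).
Proof.
move=> /psd_gram_factor [W ->] /psd_gram_factor [U ->].
rewrite mulmxA mxtrace_mulC !mulmxA -(mulmxA _ (adjmx W)).
have -> : adjmx U *m W = adjmx (adjmx W *m U) by rewrite adjmxM adjmxK.
exact: mxtrace_gram_ge0.
Qed.

End PSD.

Section Circuit.
Variables (C : numClosedFieldType) (V : finType) (Omega : V -> finType).

Definition assignment := {dffun forall v : V, Omega v}.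

(* With x fixed, the y such that [agree_off S x y] enumerate the assignments of
   the variables in S exactly once; sums over them are sums over Omega(S). *)
Definition agree_off (S : {set V}) (x y : assignment) : bool :=
  [forall (v | v \notin S), x v == y v].

Lemma eq_eval_on_scope d (c : circuit C Omega d) (x y : forall v, Omega v) :
  {in scope c, forall v, x v = y v} -> eval c x = eval c y.
Proof.
elim: c x y => [d' v e | d1 d2 l IHl r IHr | d' n din ch IH w m K] x y eq_xy /=.
- by rewrite eq_xy // inE.
- by rewrite (IHl x y) ?(IHr x y) // => u u_in; apply: eq_xy; rewrite inE u_in ?orbT.
- apply: eq_bigr => j _; rewrite (IH j x y) // => u u_in; apply: eq_xy.
  by apply/bigcupP; exists j.
Qed.

Lemma psd_eval d (c : circuit C Omega d) x : is_PUnC c -> psd (eval c x).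
Proof.
elim: c => [d' v e | d1 d2 l IHl r IHr | d' n din ch IH w m K] /=.
- by case.
- by case=> /IHl psd_l /IHr psd_r; apply: psd_tens.
- case=> PUnC_ch [w_gt0 _]; apply: psd_sum => j _.
  apply: psdZ; first by apply: ltW; case: (w_gt0 j).
  by apply: psd_sum => k _; apply/psd_conj/IH.
Qed.

Lemma qop_apply0 d' d m (K : 'I_m -> 'M[C]_(d', d)) : qop_apply K 0 = 0.
Proof. by rewrite /qop_apply big1 // => k _; rewrite mulmx0 mul0mx. Qed.

Lemma qop_apply_sum d' d m (K : 'I_m -> 'M[C]_(d', d)) (I : Type) (r : seq I)
    (P : pred I) (F : I -> 'M[C]_d) :
  qop_apply K (\sum_(i <- r | P i) F i) = \sum_(i <- r | P i) qop_apply K (F i).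
Proof.
rewrite /qop_apply exchange_big; apply: eq_bigr => k _.
by rewrite mulmx_sumr mulmx_suml.
Qed.

Lemma PUnC_empty_sample_space d (c : circuit C Omega d) v :
  is_PUnC c -> v \in scope c -> #|Omega v| = 0%N -> (1%:M : 'M[C]_d) = 0.
Proof.
move=> + + /card0_eq Omega_v0.
elim: c => [d' v' e | d1 d2 l IHl r IHr | d' n din ch IH w m K] /=.
- case=> _ <-; rewrite inE => /eqP v_eq; subst v'.
  by rewrite big_pred0 // => a; rewrite Omega_v0.
- case=> /IHl l1 /IHr r1 /setUP [/l1 | /r1] l_or_r0; rewrite -tensmx1 l_or_r0.
    by rewrite tens0mx.
  by rewrite tensmx0.
- case=> PUnC_ch [_ [_ unital_K]] /bigcupP [j _ v_in].
  have [_ <-] := unital_K j.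
  by rewrite (IH j (PUnC_ch j) v_in) qop_apply0.
Qed.

Lemma big_agree_off1 (M : nmodType) v x (F : Omega v -> M) :
  \sum_(y | agree_off [set v] x y) F (y v) = \sum_a F a.
Proof.
rewrite (partition_big (fun y : assignment => y v) xpredT) //=.
apply: eq_bigr => a _.
pose xa : assignment := [ffun u => dfwith x a u].
rewrite (big_pred1 xa) => [|y]; first by rewrite ffunE dfwith_in.
apply/andP/eqP => [[/forallP agree_xy /eqP y_v]|->].
  apply/ffunP => u; rewrite ffunE; have [<-|neq_vu] := eqVneq v u.
    by rewrite dfwith_in y_v.
  by rewrite dfwith_out //; apply/esym/eqP/(implyP (agree_xy u)); rewrite inE eq_sym.
split; last by rewrite ffunE dfwith_in.
apply/forallP => u; apply/implyP; rewrite inE eq_sym => neq_vu.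
by rewrite ffunE dfwith_out.
Qed.

Lemma big_agree_offU (M : nmodType) (S1 S2 : {set V}) x (F : assignment -> M) :
  [disjoint S1 & S2] ->
  \sum_(y | agree_off (S1 :|: S2) x y) F y =
  \sum_(y1 | agree_off S1 x y1) \sum_(y2 | agree_off S2 y1 y2) F y2.
Proof.
move=> disj_S12; symmetry.
rewrite (exchange_big_dep (agree_off (S1 :|: S2) x)) /=; last first.
  move=> y1 y2 /forallP agree1 /forallP agree2; apply/forallP => u; apply/implyP.
  rewrite inE negb_or => /andP [u_notin1 u_notin2].
  by rewrite (eqP (implyP (agree1 u) u_notin1)) (implyP (agree2 u) u_notin2).
apply: eq_bigr => y /forallP agree_xy.
pose z : assignment := [ffun u => if u \in S1 then y u else x u].
rewrite (big_pred1 z) // => y1 /=.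
apply/andP/eqP => [[/forallP agree1 /forallP agree2]|->].
  apply/ffunP => u; rewrite ffunE; case: ifP => u_in1.
    by apply/eqP/(implyP (agree2 u)); rewrite (disjointFr disj_S12 u_in1).
  by apply/esym/eqP/(implyP (agree1 u)); rewrite u_in1.
split; apply/forallP => u; apply/implyP => u_notin; rewrite ffunE.
  by rewrite (negPf u_notin).
case: ifP => // u_notin1.
by apply/(implyP (agree_xy u)); rewrite inE negb_or u_notin1.
Qed.

Lemma sum_eval_agree_off d (c : circuit C Omega d) x :
  is_PUnC c -> decomposable c -> smooth c ->
  \sum_(y | agree_off (scope c) x y) eval c y = 1%:M.
Proof.
elim: c x => [d' v e | d1 d2 l IHl r IHr | d' n din ch IH w m K] x /=.
- by move=> [_ <-] _ _; rewrite big_agree_off1.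
- case=> PUnC_l PUnC_r [dec_l [dec_r disj_lr]] [smooth_l smooth_r].
  rewrite big_agree_offU // -tensmx1 -(IHl x) // tensmx_suml.
  apply: eq_bigr => y1 _; rewrite -(IHr y1) // tensmx_sumr.
  apply: eq_bigr => y2 /forallP agree12; congr (_ *t _).
  apply: eq_eval_on_scope => u u_in_l; apply/esym/eqP/(implyP (agree12 u)).
  by rewrite (disjointFr disj_lr u_in_l).
- case=> PUnC_ch [_ [sum_w1 unital_K]] dec_ch [smooth_ch same_scope].
  have -> : 1%:M = (\sum_j w j) *: 1%:M :> 'M[C]_d' by rewrite sum_w1 scale1r.
  rewrite exchange_big scaler_suml.
  apply: eq_bigr => j _; rewrite -scaler_sumr -qop_apply_sum; congr (_ *: _).
  have -> : \bigcup_(k < n) scope (ch k) = scope (ch j).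
    apply/setP => u; apply/bigcupP/idP => [[k _]|]; first by rewrite (same_scope k j).
    by exists j.
  have [_ unital_Kj] := unital_K j.
  by rewrite (IH j x (PUnC_ch j) (dec_ch j) (smooth_ch j)).
Qed.

End Circuit.

Theorem theorem3 (C : numClosedFieldType) (V : finType) (Omega : V -> finType)
    (d : nat) (o : circuit C Omega d) (rho : 'M[C]_d) :
  is_PUnC o -> decomposable o -> smooth o -> scope o = [set: V] ->
  density_matrix rho ->
  (forall x : {dffun forall v : V, Omega v}, 0 <= \tr (eval o x *m rho)) /\
  \sum_(x : {dffun forall v : V, Omega v}) \tr (eval o x *m rho) = 1.
Proof.
move=> PUnC_o dec_o smooth_o scope_o [psd_rho tr_rho]; split=> [x|].
  exact/mxtrace_psdM_ge0/psd_rho/psd_eval.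
have mx1_neq0 : (1%:M : 'M[C]_d) != 0.
  apply/eqP=> mx1_eq0; move: tr_rho; rewrite -[rho]mul1mx mx1_eq0 mul0mx mxtrace0.
  by move/eqP; rewrite eq_sym oner_eq0.
have /fin_all_exists [x0 _] : forall v, exists a : Omega v, true.
  move=> v; have /card_gt0P [a _] : (0 < #|Omega v|)%N; last by exists a.
  rewrite lt0n; apply: contra_neq mx1_neq0; apply: PUnC_empty_sample_space PUnC_o _.
  by rewrite scope_o inE.
have agree_all y : agree_off (scope o) (finfun x0) y.
  by apply/forallP => v; rewrite scope_o inE.
rewrite -raddf_sum -mulmx_suml -(eq_bigl _ _ agree_all).
by rewrite sum_eval_agree_off // mul1mx.
Qed.
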